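(* Let $\mathcal N$ be the one-layer ReLU CNN with input dimension $1\times 3\times 1$, $d_1\ge 1$ filters of dimension $1\times 2\times 1$ and stride $1$ (so the hidden layer has dimension $1\times 2\times d_1$). Then the maximal number of linear regions of $\mathcal N$ is $R_{\mathcal N}=d_1^3+d_1^2+d_1+1$.
   Context: One-layer ReLU CNN with input $X^0\in\mathbb R^{1\times 3\times 1}$, i.e. $x=(x_1,x_2,x_3)\in\mathbb R^3$, and filters $(w_{k,1},w_{k,2})$ with biases $b_k$, $1\le k\le d_1$; the neurons are the $2d_1$ pre-activations $w_{k,1}x_1+w_{k,2}x_2+b_k$ and $w_{k,1}x_2+w_{k,2}x_3+b_k$. An activation pattern assigns $\pm1$ to each neuron; its region is the set of inputs where every pre-activation times its sign is positive. $R_{\mathcal N}$ is the maximum over all parameter values of the number of activation patterns with nonempty region. *)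

From Stdlib Require Import Reals.
From HB Require Import structures.
From mathcomp Require Import all_boot all_order all_algebra.
From mathcomp Require Import boolp Rstruct.
Set Implicit Arguments. Unset Strict Implicit. Unset Printing Implicit Defensive.
Import Order.TTheory GRing.Theory Num.Theory.
Local Open Scope ring_scope.

(* Neuron (k, j), j in {0,1}: pre-activation w_{k,1} x_{j+1} + w_{k,2} x_{j+2} + b_k
   (0-based: w k 0 * x j + w k 1 * x (j+1) + b k). *)
Definition preact (d1 : nat) (w : 'I_d1 -> 'I_2 -> R) (b : 'I_d1 -> R)
  (x : 'I_3 -> R) (n : 'I_d1 * 'I_2) : R :=
  let k := n.1 in let j := (n.2 : nat) in
  w k ord0 * x (inord j) + w k ord_max * x (inord j.+1) + b k.

Definition sgnb (s : bool) : R := if s then 1 else -1.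

Definition region_nonempty (d1 : nat) (w : 'I_d1 -> 'I_2 -> R) (b : 'I_d1 -> R)
  (s : {ffun 'I_d1 * 'I_2 -> bool}) : Prop :=
  exists x : 'I_3 -> R, forall n, 0 < sgnb (s n) * preact w b x n.

Definition num_regions (d1 : nat) (w : 'I_d1 -> 'I_2 -> R) (b : 'I_d1 -> R) : nat :=
  #|[set s : {ffun 'I_d1 * 'I_2 -> bool} | `[< region_nonempty w b s >] ]|.

(* The proof is the deletion-restriction argument for arrangements of
   hyperplanes, carried out for an arbitrary finite family of affine functions
   on R^n (section Arrangement): region_count Z P counts the sign patterns of
   the functions of P realized on the flat where those of Z vanish.  Adding a
   function q to P raises the count by at most the count on the hyperplane of
   q, with equality when q is not constant on the flat.  This yields the
   classical bound \sum_(i <= k) 'C(p, i) for p functions whose values on the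
   flat depend on k parameters (count_le_param), attained in general position
   (count_ge_generic).

   For the network (section Network), the d neurons of the first window only
   see (x_0, x_1) and those of the second window only see (x_1, x_2).  Adding
   the second-window neurons one at a time, each restricts to a plane on which
   the first window contributes 1 + d + 'C(d, 2) regions and every earlier
   second-window neuron contributes a line cut into at most 1 + d pieces.
   Summing gives (d + 1) (1 + d + 'C(d, 2)) + 'C(d, 2) (1 + d), that is
   d^3 + d^2 + d + 1 (region_total).  Filters (1, k + 1) with biases (k + 1)^2,
   whose hyperplanes are tangent to a parabola, make every step of this count
   exact (section Construction). *)

From Stdlib Require Import Reals.
From HB Require Import structures.
From mathcomp Require Import all_boot all_order all_algebra.
From mathcomp Require Import boolp Rstruct.
From mathcomp Require Import ring lra zify.
Set Implicit Arguments. Unset Strict Implicit. Unset Printing Implicit Defensive.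
Import Order.TTheory GRing.Theory Num.Theory.
Local Open Scope ring_scope.

Lemma set_induction (T : finType) (Q : {set T} -> Prop) :
  Q set0 -> (forall x (A : {set T}), x \notin A -> Q A -> Q (x |: A)) -> forall A, Q A.
Proof.
move=> Q0 QU A; move: {2}#|A| (erefl #|A|) => k; elim: k A => [|k IH] A hA.
  by move: hA => /eqP; rewrite cards_eq0 => /eqP ->.
have [x xA] : exists x, x \in A by apply/set0Pn; rewrite -card_gt0 hA.
rewrite -(setD1K xA); apply: QU; first by rewrite !inE eqxx.
by apply: IH; move: hA; rewrite (cardsD1 x) xA add1n => -[].
Qed.

(* Used to perturb a point
   without changing any of finitely many strict signs. *)
Lemma small_step (T : eqType) (s : seq T) (u L : T -> R) :
  (forall m, m \in s -> 0 < u m) ->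
  exists2 e, 0 < e & forall m, m \in s -> e * `|L m| < u m.
Proof.
elim: s => [|m s IH] hu; first by exists 1.
have [e e0 he] := IH (fun m' ms => hu m' (mem_behead (ms : m' \in behead (m :: s)))).
have um := hu m (mem_head _ _).
have L0 : 0 < 1 + `|L m| by rewrite ltr_wpDr.
pose em := u m / (1 + `|L m|).
have shrink e' e'' x : e' <= e'' -> e'' * `|L x| < u x -> e' * `|L x| < u x.
  by move=> le; apply: le_lt_trans; rewrite ler_wpM2r.
exists (Num.min e em); first by rewrite lt_min e0 divr_gt0.
move=> m'; rewrite inE => /predU1P[->|m's].
  apply: (shrink _ em); first by rewrite ge_min lexx orbT.
  by rewrite /em mulrAC ltr_pdivrMr //; nra.
by apply: shrink (he _ m's); rewrite ge_min lexx.
Qed.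

(* The number of regions cut by p hyperplanes in general position in a
   k-dimensional space: \sum_(i <= k) 'C(p, i). *)
Definition arr_bound (p k : nat) : nat := \sum_(i < k.+1) 'C(p, i).

Lemma arr_bound0 (k : nat) : arr_bound 0 k = 1%N.
Proof. by rewrite /arr_bound big_ord_recl big1 // => i _; rewrite bin0n. Qed.

Lemma arr_bound_dim0 (p : nat) : arr_bound p 0 = 1%N.
Proof. by rewrite /arr_bound big_ord1 bin0. Qed.

(* Pascal's rule: the recurrence behind deletion-restriction. *)
Lemma arr_boundS (p k : nat) : arr_bound p.+1 k.+1 = (arr_bound p k.+1 + arr_bound p k)%N.
Proof.
rewrite /arr_bound big_ord_recl bin0.
rewrite (eq_bigr (fun i : 'I_k.+1 => 'C(p, i.+1) + 'C(p, i))%N) //.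
by rewrite big_split /= addnA [in RHS]big_ord_recl bin0.
Qed.

Lemma arr_bound_mono (p k : nat) : (arr_bound p k <= arr_bound p.+1 k)%N.
Proof. by apply: leq_sum => i _; apply: leq_bin2l. Qed.

Section Arrangement.
Variables (I : finType) (n : nat) (f : I -> ('I_n -> R) -> R).
Local Notation point := ('I_n -> R).
Hypothesis f_affine : forall m (x y z : point) t,
  f m (fun i => x i + t * (y i - z i)) = f m x + t * (f m y - f m z).

Definition on_flat (Z : {set I}) (x : point) : Prop :=
  forall m, m \in Z -> f m x = 0.

Definition sign_ok (P : {set I}) (s : {ffun I -> bool}) (x : point) : Prop :=
  forall m, m \in P -> 0 < sgnb (s m) * f m x.

(* Sign patterns on P realized on the flat of Z; outside P a pattern is
   normalized to true, so that patterns are in bijection with regions. *)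
Definition patterns (Z P : {set I}) : {set {ffun I -> bool}} :=
  [set s : {ffun I -> bool} | [forall m, (m \notin P) ==> s m] &&
                              `[< exists x, on_flat Z x /\ sign_ok P s x >]].

Definition region_count (Z P : {set I}) : nat := #|patterns Z P|.

Definition constant_on (q : I) (Z : {set I}) : Prop :=
  forall x y, on_flat Z x -> on_flat Z y -> f q x = f q y.

Lemma patternsP (Z P : {set I}) (s : {ffun I -> bool}) :
  reflect ((forall m, m \notin P -> s m) /\ exists x, on_flat Z x /\ sign_ok P s x)
          (s \in patterns Z P).
Proof.
rewrite inE; apply: (iffP andP) => [[/forallP sP /asboolP ex]|[sP ex]].
  by split=> // m; apply/implyP.
by split; [apply/forallP => m; apply/implyP; apply: sP | apply/asboolP].
Qed.

Lemma on_flat0 (x : point) : on_flat set0 x.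
Proof. by move=> m; rewrite in_set0. Qed.

Lemma on_flatU1 (q : I) (Z : {set I}) (x : point) :
  on_flat (q |: Z) x <-> f q x = 0 /\ on_flat Z x.
Proof.
split=> [h|[hq hZ] m]; last by rewrite in_setU1 => /predU1P[->|/hZ].
by split=> [|m mZ]; apply: h; rewrite in_setU1 ?eqxx ?mZ ?orbT.
Qed.

Lemma on_flat1 (q : I) (x : point) : on_flat [set q] x <-> f q x = 0.
Proof. by split=> [h|h m /set1P ->]; [apply: h; rewrite set11 | ]. Qed.

Lemma nonconstant_of (Z : {set I}) (q : I) (x y : point) :
  on_flat Z x -> on_flat Z y -> f q x != f q y -> ~ constant_on q Z.
Proof. by move=> xZ yZ /eqP qxy cq; apply: qxy; apply: cq. Qed.

Lemma sgnb_mul_gt0 (v : bool) (y : R) : (0 < sgnb v * y) = (if v then 0 < y else y < 0).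
Proof. by case: v; rewrite /sgnb ?mul1r ?mulN1r ?oppr_gt0. Qed.

Lemma normr_sgnb (v : bool) : `|sgnb v| = 1.
Proof. by case: v; rewrite /sgnb ?normrN normr1. Qed.

Lemma f_segment (m : I) (x y : point) (t : R) :
  f m (fun i => x i + t * (y i - x i)) = (1 - t) * f m x + t * f m y.
Proof. by rewrite f_affine; ring. Qed.

Lemma count_set0_le (Z : {set I}) : (region_count Z set0 <= 1)%N.
Proof.
apply/card_le1_eqP => s s' /patternsP[sT _] /patternsP[s'T _].
by apply/ffunP => m; rewrite sT ?s'T ?in_set0.
Qed.

Lemma count_ge1 (Z P : {set I}) (x : point) :
  on_flat Z x -> (forall m, m \in P -> f m x != 0) -> (1 <= region_count Z P)%N.
Proof.
move=> xZ xP; rewrite card_gt0; apply/set0Pn.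
exists [ffun m => if m \in P then 0 < f m x else true]; apply/patternsP; split.
  by move=> m mP; rewrite ffunE (negbTE mP).
exists x; split=> // m mP; rewrite ffunE mP sgnb_mul_gt0.
by case: ltrgtP (xP m mP) => // _ _; rewrite eqxx.
Qed.

Lemma count_eq0 (Z P : {set I}) :
  (forall s x, on_flat Z x -> ~ sign_ok P s x) -> region_count Z P = 0%N.
Proof.
move=> none; apply/eqP; rewrite cards_eq0; apply/eqP/setP => s; rewrite in_set0.
by apply/negP => /patternsP[_ [x [xZ xP]]]; apply: (none s x).
Qed.

Definition update (s : {ffun I -> bool}) (q : I) (v : bool) : {ffun I -> bool} :=
  [ffun m => if m == q then v else s m].

(* Deletion-restriction: adding the hyperplane of q to the observed set P splits
   each region of the flat that q crosses into two. *)
Section AddOne.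
Variables (Z P : {set I}) (q : I).
Hypothesis qP : q \notin P.

Local Notation Pq := (patterns Z (q |: P)).
(* The patterns of q |: P with q positive, and those with q negative
   normalized at q; a region of P counted in both is cut by q. *)
Let Pos := Pq :&: [set s : {ffun I -> bool} | s q].
Let Neg := [set update s q true | s in Pq :\: [set s : {ffun I -> bool} | s q]].

Lemma update_notin (s : {ffun I -> bool}) (v : bool) (m : I) : m \in P -> update s q v m = s m.
Proof. by rewrite ffunE => mP; case: eqP => // mq; move: qP; rewrite -mq mP. Qed.

Lemma count_add_split : region_count Z (q |: P) = (#|Pos :|: Neg| + #|Pos :&: Neg|)%N.
Proof.
rewrite cardsUI card_in_imset ?cardsID // => s s'; rewrite !inE.
move=> /andP[sq _] /andP[s'q _] ss'; apply/ffunP => m.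
have := congr1 (fun g : {ffun I -> bool} => g m) ss'; rewrite !ffunE.
by case: eqP => [->|] //; rewrite (negbTE sq) (negbTE s'q).
Qed.

Lemma realized_Pos (s : {ffun I -> bool}) (x : point) :
  (forall m, m \notin P -> s m) -> on_flat Z x -> sign_ok P s x -> 0 < f q x -> s \in Pos.
Proof.
move=> sP xZ xP qx; have sq : s q by apply: sP.
apply/setIP; split; last by rewrite inE.
apply/patternsP; split.
  by move=> m; rewrite in_setU1 negb_or => /andP[_]; apply: sP.
exists x; split=> // m; rewrite in_setU1 => /predU1P[->|]; last exact: xP.
by rewrite sq sgnb_mul_gt0.
Qed.

Lemma realized_Neg (s : {ffun I -> bool}) (x : point) :
  (forall m, m \notin P -> s m) -> on_flat Z x -> sign_ok P s x -> f q x < 0 -> s \in Neg.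
Proof.
move=> sP xZ xP qx; have sq : s q by apply: sP.
apply/imsetP; exists (update s q false); last first.
  by apply/ffunP => m; rewrite !ffunE; case: eqP => [->|].
apply/setDP; split; last by rewrite inE ffunE eqxx.
apply/patternsP; split.
  move=> m; rewrite in_setU1 negb_or => /andP[mq mP].
  by rewrite ffunE (negbTE mq); apply: sP.
exists x; split=> // m; rewrite in_setU1 => /predU1P[->|mP].
  by rewrite ffunE eqxx sgnb_mul_gt0.
by rewrite update_notin //; apply: xP.
Qed.

Lemma Pos_Neg_sub : Pos :|: Neg \subset patterns Z P.
Proof.
apply/subsetP => s /setUP[/setIP[/patternsP[sP [x [xZ xP]]]]|/imsetP[s']].
  rewrite inE => sq; apply/patternsP; split.
    by move=> m mP; case: (m =P q) => [->|/eqP mq] //; apply: sP; rewrite in_setU1 negb_or mq.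
  by exists x; split=> // m mP; apply: xP; rewrite in_setU1 mP orbT.
move=> /setDP[/patternsP[sP [x [xZ xP]]] _] ->; apply/patternsP; split.
  move=> m mP; rewrite ffunE; case: eqP => // /eqP mq; apply: sP.
  by rewrite in_setU1 negb_or mq.
by exists x; split=> // m mP; rewrite update_notin //; apply: xP; rewrite in_setU1 mP orbT.
Qed.

(* A pattern realized on both sides of q is realized on q itself: move along
   the segment joining the two witnesses to the point where q vanishes. *)
Lemma Pos_Neg_meet : Pos :&: Neg \subset patterns (q |: Z) P.
Proof.
apply/subsetP => s /setIP[/setIP[/patternsP[sP [x [xZ xP]]]]].
rewrite inE => sq /imsetP[s' /setDP[/patternsP[_ [y [yZ yP]]]]].
rewrite inE => s'q ss'.
have qx : 0 < f q x by have := xP q (setU11 _ _); rewrite sq sgnb_mul_gt0.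
have qy : f q y < 0 by have := yP q (setU11 _ _); rewrite (negbTE s'q) sgnb_mul_gt0.
pose t := f q x / (f q x - f q y).
have gap : 0 < f q x - f q y by lra.
have t0 : 0 < t by rewrite divr_gt0.
have t1 : t < 1 by rewrite ltr_pdivrMr // mul1r; lra.
apply/patternsP; split=> [m mP|].
  by case: (m =P q) => [->|/eqP mq] //; apply: sP; rewrite in_setU1 negb_or mq.
exists (fun i => x i + t * (y i - x i)); split.
  apply/on_flatU1; split=> [|m mZ]; rewrite f_segment; last by rewrite xZ ?yZ // !mulr0 addr0.
  have -> : (1 - t) * f q x + t * f q y = f q x - t * (f q x - f q y) by ring.
  by rewrite /t divfK ?subrr // gt_eqF.
move=> m mP; rewrite f_segment.
have -> : sgnb (s m) * ((1 - t) * f m x + t * f m y) =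
  (1 - t) * (sgnb (s m) * f m x) + t * (sgnb (s m) * f m y) by ring.
have sy : s' m = s m by rewrite ss' update_notin.
have xm : 0 < sgnb (s m) * f m x by apply: xP; rewrite in_setU1 mP orbT.
have ym : 0 < sgnb (s m) * f m y by rewrite -sy; apply: yP; rewrite in_setU1 mP orbT.
by apply: addr_gt0; apply: mulr_gt0; rewrite ?subr_gt0.
Qed.

Lemma patterns_split : patterns Z P \subset Pos :|: Neg :|: patterns (q |: Z) P.
Proof.
apply/subsetP => s /patternsP[sP [x [xZ xP]]]; rewrite !in_setU.
case: (ltrgtP (f q x) 0) => qx.
- by rewrite (realized_Neg sP xZ xP qx) orbT.
- by rewrite (realized_Pos sP xZ xP qx).
- by apply/orP; right; apply/patternsP; split=> //; exists x; split=> //; apply/on_flatU1.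
Qed.

(* If q is not constant on the flat, a region met by q is cut by it: push the
   witness slightly, in either direction, along which q varies. *)
Lemma restrict_sub : ~ constant_on q Z -> patterns (q |: Z) P \subset Pos :&: Neg.
Proof.
move=> /existsNP[x /existsNP[y /not_implyP[xZ /not_implyP[yZ qxy]]]].
apply/subsetP => s /patternsP[sP [z [/on_flatU1[qz zZ] zP]]].
have [e e0 small] := @small_step _ (enum P) (fun m => sgnb (s m) * f m z)
  (fun m => f m y - f m x) (fun m mP => zP m (etrans (esym (mem_enum _ _)) mP)).
pose z' t := fun i => z i + t * (y i - x i).
have z'Z t : on_flat Z (z' t) by move=> m mZ; rewrite f_affine zZ ?xZ ?yZ // subrr mulr0 addr0.
have z'P t : `|t| = e -> sign_ok P s (z' t).
  move=> te m mP; have := small m (etrans (mem_enum _ _) mP).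
  have := ler_norm (- (sgnb (s m) * (t * (f m y - f m x)))).
  rewrite normrN !normrM te normr_sgnb mul1r f_affine mulrDr; lra.
have qz' t : f q (z' t) = t * (f q y - f q x) by rewrite f_affine qz add0r.
have ePos : `|e| = e by rewrite gtr0_norm.
have eNeg : `|- e| = e by rewrite normrN gtr0_norm.
apply/setIP; case: (ltrgtP (f q y - f q x) 0) => D.
- split; [apply: (realized_Pos sP (z'Z (- e)) (z'P _ eNeg))
         | apply: (realized_Neg sP (z'Z e) (z'P _ ePos))]; rewrite qz'.
    by rewrite mulNr -mulrN mulr_gt0 // oppr_gt0.
  by rewrite pmulr_rlt0.
- split; [apply: (realized_Pos sP (z'Z e) (z'P _ ePos))
         | apply: (realized_Neg sP (z'Z (- e)) (z'P _ eNeg))]; rewrite qz'.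
    by rewrite mulr_gt0.
  by rewrite mulNr oppr_lt0 mulr_gt0.
- by case: qxy; apply/eqP; rewrite eq_sym -subr_eq0 D.
Qed.

Lemma count_add_le : (region_count Z (q |: P) <= region_count Z P + region_count (q |: Z) P)%N.
Proof.
rewrite count_add_split; apply: leq_add; apply: subset_leq_card.
  exact: Pos_Neg_sub.
exact: Pos_Neg_meet.
Qed.

Lemma count_add_ge :
  ~ constant_on q Z ->
  (region_count Z P + region_count (q |: Z) P <= region_count Z (q |: P))%N.
Proof.
move=> nc; rewrite count_add_split.
apply: leq_add; apply: subset_leq_card; last exact: restrict_sub.
apply: subset_trans patterns_split _; rewrite subUset subxx /=.
exact: subset_trans (restrict_sub nc) (subset_trans (subsetIl _ _) (subsetUl _ _)).
Qed.

Lemma count_add_nonzero :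
  (forall x, on_flat Z x -> f q x != 0) -> (region_count Z P <= region_count Z (q |: P))%N.
Proof.
move=> nz; rewrite count_add_split; apply: leq_trans (leq_addr _ _); apply: subset_leq_card.
apply/subsetP => s /(subsetP patterns_split); rewrite in_setU => /orP[//|].
by case/patternsP => _ [x [/on_flatU1[qx xZ] _]]; move: (nz x xZ); rewrite qx eqxx.
Qed.

Lemma count_add_constant : constant_on q Z -> (region_count Z (q |: P) <= region_count Z P)%N.
Proof.
move=> cq; case: (pselect (exists2 z, on_flat Z z & f q z = 0)) => [[z zZ qz]|nz].
  rewrite count_eq0 // => s x xZ xP.
  by have := xP q (setU11 _ _); rewrite (cq x z xZ zZ) qz mulr0 ltxx.
rewrite (leq_trans count_add_le) // [region_count (q |: Z) P]count_eq0 ?addn0 //.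
by move=> s x /on_flatU1[qx xZ] _; apply: nz; exists x.
Qed.
End AddOne.

Lemma count_drop_constant (Z P Q : {set I}) :
  (forall q, q \in Q -> constant_on q Z) -> (region_count Z (P :|: Q) <= region_count Z P)%N.
Proof.
elim/set_induction: Q => [|q Q qQ IH] cQ; first by rewrite setU0.
apply: leq_trans (IH (fun q' h => cQ q' (setU1r _ h))); rewrite setUCA.
case: (boolP (q \in P :|: Q)) => qPQ.
  by have /setUidPr -> : [set q] \subset P :|: Q by rewrite sub1set.
by apply: count_add_constant qPQ _; apply: cQ; rewrite setU11.
Qed.

Lemma count_add_nonzeros (Z P Q : {set I}) :
  (forall q, q \in Q -> forall x, on_flat Z x -> f q x != 0) ->
  (region_count Z P <= region_count Z (P :|: Q))%N.
Proof.
elim/set_induction: Q => [|q Q qQ IH] nQ; first by rewrite setU0.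
apply: leq_trans (IH (fun q' h => nQ q' (setU1r _ h))) _; rewrite setUCA.
case: (boolP (q \in P :|: Q)) => qPQ.
  by have /setUidPr -> : [set q] \subset P :|: Q by rewrite sub1set.
by apply: count_add_nonzero qPQ _; apply: nQ; rewrite setU11.
Qed.

(* The values on the flat Z of the functions in S are affine functions of k
   real parameters: the flat is at most k-dimensional as seen from S. *)
Definition param (k : nat) (Z S : {set I}) : Prop :=
  exists (a : I -> R) (L : I -> 'I_k -> R), forall x, on_flat Z x ->
    exists c : 'I_k -> R, forall m, m \in S -> f m x = a m + \sum_(i < k) L m i * c i.

Lemma param0_constant (Z S : {set I}) (m : I) : param 0 Z S -> m \in S -> constant_on m Z.
Proof.
move=> [a [L hp]] mS x y xZ yZ.
have [c hc] := hp x xZ; have [c' hc'] := hp y yZ.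
by rewrite hc // hc' // !big_ord0.
Qed.

(* Cutting by a function q that is not constant on the flat eliminates one
   parameter, using the equation q = 0. *)
Lemma param_cut (k : nat) (Z S : {set I}) (q : I) :
  param k.+1 Z S -> q \in S -> ~ constant_on q Z -> param k (q |: Z) S.
Proof.
move=> [a [L hp]] qS nc.
have [i Li] : exists i, L q i != 0.
  apply: contra_notP nc => allL0 x y xZ yZ.
  have L0 j : L q j = 0 by apply/eqP; apply: contra_notT allL0 => h; exists j.
  have [c hc] := hp x xZ; have [c' hc'] := hp y yZ.
  by rewrite hc // hc' // !big1 // => j _; rewrite L0 mul0r.
exists (fun m => a m - L m i * (a q / L q i)).
exists (fun m j => L m (lift i j) - L m i * (L q (lift i j) / L q i)).
move=> x /on_flatU1[qx xZ]; have [c hc] := hp x xZ.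
exists (fun j => c (lift i j)) => m mS.
set Sq := \sum_(j < k) L q (lift i j) * c (lift i j).
have ci : c i = - (a q + Sq) / L q i.
  have := hc q qS; rewrite qx (bigD1_ord i) //= -/Sq => hq.
  by apply: (mulfI Li); rewrite mulrCA divff // mulr1; lra.
rewrite hc // (bigD1_ord i) //= ci.
have -> : \sum_(j < k) (L m (lift i j) - L m i * (L q (lift i j) / L q i)) * c (lift i j) =
    \sum_(j < k) L m (lift i j) * c (lift i j) - L m i / L q i * Sq.
  by rewrite mulr_sumr -sumrB; apply: eq_bigr => j _; field.
by field.
Qed.

Lemma count_le_param (k : nat) (Z S P : {set I}) :
  param k Z S -> P \subset S -> (region_count Z P <= arr_bound #|P| k)%N.
Proof.
elim/set_induction: P k Z => [|q P qP IH] k Z hp PS.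
  by rewrite cards0 arr_bound0 count_set0_le.
have qS : q \in S by apply: (subsetP PS); rewrite setU11.
have {}PS : P \subset S by apply: subset_trans PS; apply: subsetUr.
rewrite cardsU1 qP add1n.
case: (pselect (constant_on q Z)) => cq.
  apply: (leq_trans (count_add_constant qP cq)).
  exact: leq_trans (IH _ _ hp PS) (arr_bound_mono _ _).
case: k hp => [|k] hp; first by case: cq; apply: param0_constant hp qS.
rewrite arr_boundS; apply: (leq_trans (count_add_le Z qP)).
exact: leq_add (IH _ _ hp PS) (IH _ _ (param_cut hp qS cq) PS).
Qed.

Definition avoids (Z P : {set I}) : Prop :=
  exists2 x, on_flat Z x & forall m, m \in P -> f m x != 0.

Fixpoint generic (k : nat) (Z P : {set I}) : Prop :=
  avoids Z P /\
  if k is k'.+1 then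
    forall q, q \in P -> ~ constant_on q Z /\ generic k' (q |: Z) (P :\ q)
  else True.

Lemma generic_avoids (k : nat) (Z P : {set I}) : generic k Z P -> avoids Z P.
Proof. by case: k => [|k] []. Qed.

Lemma generic_sub (k : nat) (Z P P' : {set I}) :
  P' \subset P -> generic k Z P -> generic k Z P'.
Proof.
elim: k Z P P' => [|k IH] Z P P' sP [[x xZ xP] gen].
  by split=> //; exists x => // m /(subsetP sP); apply: xP.
split; first by exists x => // m /(subsetP sP); apply: xP.
move=> q qP'; have [nc gq] := gen q (subsetP sP q qP').
by split=> //; apply: IH gq; apply: setSD.
Qed.

Lemma count_ge_generic (k : nat) (Z P : {set I}) :
  generic k Z P -> (arr_bound #|P| k <= region_count Z P)%N.
Proof.
elim/set_induction: P k Z => [|q P qP IH] k Z gen.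
  by rewrite cards0 arr_bound0; have [x xZ xP] := generic_avoids gen; apply: count_ge1 xP.
have genP : generic k Z P by apply: generic_sub gen; apply: subsetUr.
case: k gen genP => [|k] gen genP.
  by rewrite arr_bound_dim0; have [x xZ xP] := generic_avoids gen; apply: count_ge1 xP.
have [nc gq] := gen.2 q (setU11 _ _); rewrite setU1K // in gq.
rewrite cardsU1 qP add1n arr_boundS; apply: leq_trans (count_add_ge qP nc).
exact: leq_add (IH _ _ genP) (IH _ _ gq).
Qed.
End Arrangement.

Lemma region_total (d : nat) :
  (d.+1 * arr_bound d 2 + 'C(d, 2) * arr_bound d 1 = d ^ 3 + d ^ 2 + d + 1)%N.
Proof.
have C2 := mul_bin_left d 1; rewrite bin1 in C2.
rewrite /arr_bound !big_ord_recr big_ord0 /= bin0 bin1.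
move: C2; set C := 'C(d, 2); case: d C => [|d] C /=; nia.
Qed.

Lemma sum_I2 (F : 'I_2 -> R) : \sum_(i < 2) F i = F ord0 + F ord_max.
Proof. by rewrite big_ord_recr big_ord1 /=; congr (F _ + _); apply: val_inj. Qed.

Lemma sum_delta (T : finType) (a : T) (g : T -> R) : \sum_i (i == a)%:R * g i = g a.
Proof.
rewrite (bigD1 a) //= eqxx mul1r big1 ?addr0 // => i /negbTE ->.
by rewrite mul0r.
Qed.

Section Network.
Variables (d : nat) (w : 'I_d -> 'I_2 -> R) (b : 'I_d -> R).
Local Notation neuron := ('I_d * 'I_2)%type.
Local Notation nf := (fun (m : neuron) (x : 'I_3 -> R) => preact w b x m).

Lemma preactE (x : 'I_3 -> R) (m : neuron) :
  preact w b x m = w m.1 ord0 * x (inord m.2) + w m.1 ord_max * x (inord m.2.+1) + b m.1.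
Proof. by []. Qed.

Lemma preact_affine (m : neuron) (x y z : 'I_3 -> R) (t : R) :
  nf m (fun i => x i + t * (y i - z i)) = nf m x + t * (nf m y - nf m z).
Proof. by rewrite /= !preactE; ring. Qed.

Lemma num_regions_count : num_regions w b = region_count nf set0 setT.
Proof.
apply: eq_card => s; rewrite inE; apply/asboolP/patternsP => [[x xP]|[_ [x [_ xP]]]].
  split=> [m|]; first by rewrite in_setT.
  by exists x; split=> [m|m _]; [rewrite in_set0 | apply: xP].
by exists x => m; apply: xP; rewrite in_setT.
Qed.

Definition window (j : 'I_2) : {set neuron} := [set m | m.2 == j].
Local Notation A := (window ord0).
Local Notation B := (window ord_max).

Lemma card_window (j : 'I_2) : #|window j| = d.
Proof.
have -> : window j = setX setT [set j] by apply/setP => m; rewrite !inE.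
by rewrite cardsX cardsT card_ord cards1 muln1.
Qed.

Lemma windowsU : A :|: B = setT.
Proof. by apply/setP => -[k [[|[|j]] jlt]] //; rewrite !inE ?orbT. Qed.

Lemma window_elem (j : 'I_2) (m : neuron) : m \in window j -> m = (m.1, j).
Proof. by case: m => k j'; rewrite inE => /eqP /= ->. Qed.

Lemma notin_first (m : neuron) : m \in B -> m \notin A.
Proof. by rewrite !inE => /eqP ->. Qed.

Lemma param_window (j : 'I_2) : param nf 2 set0 (window j).
Proof.
exists (fun m => b m.1), (fun m i => w m.1 i) => x _.
exists (fun i => x (inord (j + i))) => -[k j'] /=; rewrite inE /= => /eqP ->.
by rewrite sum_I2 preactE /= addn0 addn1 addrC addrA.
Qed.

Lemma param_all : param nf 3 set0 setT.
Proof.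
exists (fun m => b m.1).
exists (fun (m : neuron) (i : 'I_3) =>
  w m.1 ord0 * (i == inord m.2)%:R + w m.1 ord_max * (i == inord m.2.+1)%:R).
move=> x _; exists x => m _.
rewrite preactE (eq_bigr (fun i => w m.1 ord0 * ((i == inord m.2)%:R * x i) +
  w m.1 ord_max * ((i == inord m.2.+1)%:R * x i))); last by move=> i _; ring.
by rewrite big_split /= -!mulr_sumr !sum_delta; ring.
Qed.

Lemma count_first_le (k : nat) (Z S : {set neuron}) :
  param nf k Z S -> A \subset S -> (region_count nf Z A <= arr_bound d k)%N.
Proof. by move=> p AS; have := count_le_param preact_affine p AS; rewrite card_window. Qed.

(* On a flat that is a plane for the whole layer and a line for the second
   window, each second-window neuron adds at most arr_bound d 1 regions to the
   arrangement of the first window. *)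
Lemma count_layer_le (Z Q : {set neuron}) :
  param nf 2 Z setT -> param nf 1 Z B -> Q \subset B ->
  (region_count nf Z (A :|: Q) <= arr_bound d 2 + #|Q| * arr_bound d 1)%N.
Proof.
move=> plane line; elim/set_induction: Q => [|q Q qQ IH] QB.
  by rewrite setU0 cards0 addn0 (count_first_le plane (subsetT _)).
have qB : q \in B by apply: (subsetP QB); rewrite setU11.
have {}QB : Q \subset B by apply: subset_trans QB; apply: subsetUr.
have qAQ : q \notin A :|: Q by rewrite in_setU negb_or notin_first.
rewrite setUCA cardsU1 qQ mulSn addnCA.
case: (pselect (constant_on nf q Z)) => cq.
  apply: leq_trans (count_add_constant preact_affine qAQ cq) _.
  exact: leq_trans (IH QB) (leq_addl _ _).
apply: leq_trans (count_add_le preact_affine Z qAQ) _; rewrite addnC leq_add ?IH //.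
have line' := param_cut plane (in_setT q) cq.
have point := param_cut line qB cq.
apply: leq_trans (count_drop_constant preact_affine _ _) _.
  by move=> q' /(subsetP QB) q'B; apply: param0_constant point q'B.
exact: count_first_le line' (subsetT _).
Qed.

Lemma count_total_le (Q : {set neuron}) : Q \subset B ->
  (region_count nf set0 (A :|: Q) <= #|Q|.+1 * arr_bound d 2 + 'C(#|Q|, 2) * arr_bound d 1)%N.
Proof.
elim/set_induction: Q => [|q Q qQ IH] QB.
  by rewrite setU0 cards0 mul1n addn0 (count_first_le (param_window _) (subxx _)).
have qB : q \in B by apply: (subsetP QB); rewrite setU11.
have {}QB : Q \subset B by apply: subset_trans QB; apply: subsetUr.
have qAQ : q \notin A :|: Q by rewrite in_setU negb_or notin_first.
rewrite setUCA cardsU1 qQ add1n binS bin1.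
case: (pselect (constant_on nf q set0)) => cq.
  apply: leq_trans (count_add_constant preact_affine qAQ cq) (leq_trans (IH QB) _).
  by rewrite leq_add // leq_mul // leq_addr.
apply: leq_trans (count_add_le preact_affine set0 qAQ) _.
have layer := count_layer_le (param_cut param_all (in_setT q) cq)
  (param_cut (param_window _) qB cq) QB.
move: (IH QB) layer; set c0 := region_count _ _ _; set c1 := region_count _ _ _.
set X := arr_bound d 2; set Y := arr_bound d 1; set C := 'C(_, 2); nia.
Qed.

Lemma num_regions_le : (num_regions w b <= d ^ 3 + d ^ 2 + d + 1)%N.
Proof.
have := count_total_le (subxx B).
by rewrite card_window region_total windowsU -num_regions_count.
Qed.
End Network.

Lemma neq0_by (T : zmodType) (a c : T) : a = c -> c != 0 -> a != 0.
Proof. by move=> ->. Qed.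

Section Construction.
Variable d : nat.
Local Notation neuron := ('I_d * 'I_2)%type.
Local Notation A := (window d ord0).
Local Notation B := (window d ord_max).

(* Filter k is (1, s_k) with bias s_k^2, s_k = k + 1: the neuron at position j
   is the tangent line x_j + s x_(j+1) + s^2 = 0 to the parabola x_j = x_(j+1)^2 / 4. *)
Definition slope (k : 'I_d) : R := k.+1%:R.
Definition w_ex (k : 'I_d) (j : 'I_2) : R := if j == ord0 then 1 else slope k.
Definition b_ex (k : 'I_d) : R := slope k ^+ 2.
Local Notation nf := (fun (m : neuron) (x : 'I_3 -> R) => preact w_ex b_ex x m).

Local Notation ex_affine := (preact_affine w_ex b_ex).

Definition pt3 (T : Type) (a0 a1 a2 : T) : 'I_3 -> T :=
  fun i => if val i == 0%N then a0 else if val i == 1%N then a1 else a2.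

Lemma slope_gt0 (k : 'I_d) : 0 < slope k.
Proof. exact: ltr0Sn. Qed.

Lemma slope_neq (k l : 'I_d) : k != l -> slope k - slope l != 0.
Proof. by rewrite subr_eq0 /slope eqr_nat eqSS. Qed.

Lemma nf_eval (m : neuron) (x : 'I_3 -> R) :
  nf m x = x (inord m.2) + slope m.1 * x (inord m.2.+1) + slope m.1 ^+ 2.
Proof. by rewrite /= preactE /w_ex /b_ex /= mul1r. Qed.

Lemma first_pt3 (m : neuron) (a0 a1 a2 : R) :
  m \in A -> nf m (pt3 a0 a1 a2) = a0 + slope m.1 * a1 + slope m.1 ^+ 2.
Proof. by move/window_elem => ->; rewrite nf_eval /pt3 /= !inordK. Qed.

Lemma second_pt3 (m : neuron) (a0 a1 a2 : R) :
  m \in B -> nf m (pt3 a0 a1 a2) = a1 + slope m.1 * a2 + slope m.1 ^+ 2.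
Proof. by move/window_elem => ->; rewrite nf_eval /pt3 /= !inordK. Qed.

Lemma first_slope_neq (m q : neuron) : m \in A -> q \in A -> m != q ->
  slope m.1 - slope q.1 != 0.
Proof.
move=> /window_elem mA /window_elem qA mq; apply: slope_neq.
by apply: contraNneq mq => e; rewrite mA qA e.
Qed.

Lemma slope2_neq0 (k : 'I_d) : slope k ^+ 2 != 0.
Proof. by rewrite expf_neq0 // gt_eqF // slope_gt0. Qed.

Lemma generic_first_plane (Z P : {set neuron}) (lift : R -> R -> 'I_3 -> R) :
  P \subset A -> (forall u v, on_flat nf Z (lift u v)) ->
  (forall m u v, m \in A -> nf m (lift u v) = u + slope m.1 * v + slope m.1 ^+ 2) ->
  generic nf 2 Z P.
Proof.
move=> PA flat val; have inA m : m \in P -> m \in A := subsetP PA m.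
split.
  exists (lift 0 0) => // m mP; rewrite val ?inA //.
  by apply: (neq0_by (c := slope m.1 ^+ 2)); [ring | exact: slope2_neq0].
move=> q qP; pose s := slope q.1.
split.
  apply: (nonconstant_of (f := nf) (q := q) (flat 0 0) (flat 0 1)).
  rewrite !val ?inA // -subr_eq0; apply: (neq0_by (c := - s)); first by rewrite /s; ring.
  by rewrite oppr_eq0 gt_eqF // slope_gt0.
have onq u v : u + s * v + s ^+ 2 = 0 -> on_flat nf (q |: Z) (lift u v).
  by move=> h; apply/on_flatU1; split; rewrite ?val ?inA.
split.
  exists (lift (- s ^+ 2) 0) => [|m /setD1P[mq mP]]; first by apply: onq; ring.
  rewrite val ?inA //.
  apply: (neq0_by (c := (slope m.1 - s) * (slope m.1 + s))); first by ring.
  by rewrite mulf_neq0 ?first_slope_neq ?inA // gt_eqF // addr_gt0 ?slope_gt0.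
move=> q' /setD1P[q'q q'P]; pose s' := slope q'.1.
split.
  apply: (nonconstant_of (f := nf) (q := q') (onq (- s ^+ 2) 0 _) (onq (- s - s ^+ 2) 1 _));
    try ring.
  rewrite !val ?inA // -subr_eq0.
  apply: (neq0_by (c := s - s')); first by rewrite /s /s'; ring.
  by rewrite first_slope_neq ?inA // eq_sym.
split=> //; exists (lift (s * s') (- (s + s'))).
  apply/on_flatU1; split; last by apply: onq; ring.
  by rewrite val ?inA // -/s'; ring.
move=> m /setD1P[mq' /setD1P[mq mP]]; rewrite val ?inA //.
apply: (neq0_by (c := (slope m.1 - s) * (slope m.1 - s'))); first by ring.
by rewrite mulf_neq0 ?first_slope_neq ?inA.
Qed.

Lemma generic_first_line (Z P : {set neuron}) (v x2 : R) :
  P \subset A -> 0 <= v -> (forall u, on_flat nf Z (pt3 u v x2)) -> generic nf 1 Z P.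
Proof.
move=> PA v0 flat; have inA m : m \in P -> m \in A := subsetP PA m.
split.
  exists (pt3 0 v x2) => // m mP; rewrite first_pt3 ?inA //.
  apply: (neq0_by (c := slope m.1 * (v + slope m.1))); first by ring.
  by rewrite gt_eqF // mulr_gt0 ?ltr_wpDl ?slope_gt0.
move=> q qP; pose s := slope q.1.
split.
  apply: (nonconstant_of (f := nf) (q := q) (flat 0) (flat 1)).
  rewrite !first_pt3 ?inA // -subr_eq0.
  by apply: (neq0_by (c := -1)); [ring | rewrite oppr_eq0 oner_eq0].
split=> //; exists (pt3 (- (s * v + s ^+ 2)) v x2).
  by apply/on_flatU1; split; [rewrite first_pt3 ?inA // -/s; ring | apply: flat].
move=> m /setD1P[mq mP]; rewrite first_pt3 ?inA //.
apply: (neq0_by (c := (slope m.1 - s) * (v + slope m.1 + s))); first by ring.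
rewrite mulf_neq0 ?first_slope_neq ?inA // gt_eqF //.
by have := slope_gt0 m.1; have := slope_gt0 q.1; rewrite -/s; lra.
Qed.

Lemma second_pair_line (j k : 'I_d) (x : 'I_3 -> R) : j != k ->
  on_flat nf ((j, ord_max) |: [set (k, ord_max)]) x ->
  x (inord 1) = slope j * slope k /\ x (inord 2) = - (slope j + slope k).
Proof.
move=> jk /on_flatU1[]; rewrite on_flat1 !nf_eval /=.
move: (x (inord 1)) (x (inord 2)) => x1 x2 hj hk.
have : (slope j - slope k) * (x2 + (slope j + slope k)) = 0.
  by rewrite -(subrr 0) -{1}hj -hk; ring.
move/eqP; rewrite mulf_eq0 (negbTE (slope_neq jk)) addr_eq0 => /eqP e2.
by split=> //; apply/eqP; rewrite -subr_eq0 -hk e2; apply/eqP; ring.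
Qed.

Lemma second_pair_nonzero (j k l : 'I_d) (x : 'I_3 -> R) : j != k -> l != j -> l != k ->
  on_flat nf ((j, ord_max) |: [set (k, ord_max)]) x -> nf (l, ord_max) x != 0.
Proof.
move=> jk lj lk /(second_pair_line jk)[x1 x2]; rewrite nf_eval /= x1 x2.
apply: (neq0_by (c := (slope l - slope j) * (slope l - slope k))); first by ring.
by rewrite mulf_neq0 ?slope_neq.
Qed.

(* The hyperplane G_k of the second window projects onto the (x_0, x_1)-plane. *)
Lemma on_second (k : 'I_d) (u v : R) :
  on_flat nf [set (k, ord_max)] (pt3 u v (- (v + slope k ^+ 2) / slope k)).
Proof.
have sk0 : slope k != 0 by rewrite gt_eqF ?slope_gt0.
by apply/on_flat1; rewrite second_pt3 ?inE //=; field; rewrite nat1r.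
Qed.

Lemma second_nonconstant (j k : 'I_d) :
  j != k -> ~ constant_on nf (j, ord_max) [set (k, ord_max)].
Proof.
move=> jk; have onk := @on_second k.
apply: (nonconstant_of (f := nf) (q := (j, ord_max)) (onk 0 0) (onk 0 1)).
have sk0 : slope k != 0 by rewrite gt_eqF ?slope_gt0.
rewrite !second_pt3 ?inE //= -subr_eq0.
apply: (neq0_by (c := (slope j - slope k) / slope k)); first by field; rewrite nat1r.
by rewrite mulf_neq0 ?invr_eq0 ?slope_neq.
Qed.

(* On the line G_j /\ G_k the first window cuts 1 + d pieces, which the other
   second-window neurons do not cut further. *)
Lemma count_line_ge (j k : 'I_d) (Q : {set neuron}) :
  j != k -> Q \subset B -> (j, ord_max) \notin Q -> (k, ord_max) \notin Q ->
  (arr_bound d 1 <= region_count nf ((j, ord_max) |: [set (k, ord_max)]) (A :|: Q))%N.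
Proof.
move=> jk QB jQ kQ.
have onjk u : on_flat nf ((j, ord_max) |: [set (k, ord_max)])
    (pt3 u (slope j * slope k) (- (slope j + slope k))).
  by apply/on_flatU1; rewrite on_flat1 !second_pt3 ?inE //=; split; ring.
apply: leq_trans (count_add_nonzeros _ _) => [|q qQ x xjk].
  have := count_ge_generic ex_affine (generic_first_line (subxx A) _ onjk).
  by rewrite card_window; apply; rewrite mulr_ge0 // ltW ?slope_gt0.
have qE := window_elem (subsetP QB q qQ); rewrite qE.
apply: (second_pair_nonzero jk _ _ xjk).
  by apply: contraNneq jQ => e; rewrite -e -qE.
by apply: contraNneq kQ => e; rewrite -e -qE.
Qed.

(* The arrangement on the hyperplane of G_k: the first window is in general
   position there, and each further G_j adds a line cut into 1 + d pieces. *)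
Lemma count_layer_ge (k : 'I_d) (Q : {set neuron}) :
  Q \subset B -> (k, ord_max) \notin Q ->
  (arr_bound d 2 + #|Q| * arr_bound d 1 <=
     region_count nf [set (k, ord_max)] (A :|: Q))%N.
Proof.
elim/set_induction: Q => [|q Q qQ IH] QB kQ.
  rewrite setU0 cards0 addn0.
  have := count_ge_generic ex_affine (generic_first_plane (subxx A) (@on_second k) _).
  by rewrite card_window; apply=> m u v mA; rewrite first_pt3.
have [j qj] : exists j, q = (j, ord_max).
  by exists q.1; apply: window_elem; apply: (subsetP QB); rewrite setU11.
subst q; have jk : j != k by apply: contraNneq kQ => ->; rewrite setU11.
have {}QB : Q \subset B by apply: subset_trans QB; apply: subsetUr.
have {}kQ : (k, ord_max) \notin Q by apply: contra kQ; apply: setU1r.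
have qAQ : (j, ord_max) \notin A :|: Q by rewrite in_setU negb_or qQ inE.
move: (count_line_ge jk QB qQ kQ) (IH QB kQ).
move: (count_add_ge ex_affine qAQ (second_nonconstant jk)).
rewrite setUCA cardsU1 qQ mulSn.
set c0 := region_count _ [set (k, ord_max)] (A :|: Q).
set c1 := region_count _ _ (A :|: Q).
set c2 := region_count _ _ ((j, ord_max) |: _); lia.
Qed.

Lemma count_total_ge (Q : {set neuron}) : Q \subset B ->
  (#|Q|.+1 * arr_bound d 2 + 'C(#|Q|, 2) * arr_bound d 1 <= region_count nf set0 (A :|: Q))%N.
Proof.
elim/set_induction: Q => [|q Q qQ IH] QB.
  rewrite setU0 cards0 mul1n addn0.
  have := count_ge_generic ex_affine (generic_first_plane (lift := fun u v => pt3 u v 0)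
    (subxx A) (fun u v => on_flat0 _ _) _).
  by rewrite card_window; apply=> m u v mA; rewrite first_pt3.
have [k qk] : exists k, q = (k, ord_max).
  by exists q.1; apply: window_elem; apply: (subsetP QB); rewrite setU11.
subst q; have {}QB : Q \subset B by apply: subset_trans QB; apply: subsetUr.
have qAQ : (k, ord_max) \notin A :|: Q by rewrite in_setU negb_or qQ inE.
have nc : ~ constant_on nf (k, ord_max) set0.
  apply: (nonconstant_of (f := nf) (on_flat0 _ (pt3 0 0 0)) (on_flat0 _ (pt3 0 1 0))).
  rewrite !second_pt3 ?inE //= -subr_eq0.
  by apply: (neq0_by (c := -1)); [ring | rewrite oppr_eq0 oner_eq0].
move: (count_add_ge ex_affine qAQ nc) (IH QB) (count_layer_ge QB qQ).
rewrite setU0 setUCA cardsU1 qQ add1n binS bin1.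
set c0 := region_count _ set0 (A :|: Q); set c1 := region_count _ _ (A :|: Q).
set c2 := region_count _ _ ((k, ord_max) |: _); nia.
Qed.

Lemma num_regions_ge : (d ^ 3 + d ^ 2 + d + 1 <= num_regions w_ex b_ex)%N.
Proof.
have := count_total_ge (subxx B).
by rewrite card_window region_total windowsU -num_regions_count.
Qed.
End Construction.

Theorem mainTheorem8 (d1 : nat) (hd1 : (1 <= d1)%N) :
  (forall (w : 'I_d1 -> 'I_2 -> R) (b : 'I_d1 -> R),
      (num_regions w b <= d1 ^ 3 + d1 ^ 2 + d1 + 1)%N) /\
  (exists (w : 'I_d1 -> 'I_2 -> R) (b : 'I_d1 -> R),
      num_regions w b = (d1 ^ 3 + d1 ^ 2 + d1 + 1)%N).
Proof.
split=> [w b|]; first exact: num_regions_le.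
exists (@w_ex d1), (@b_ex d1).
by apply/eqP; rewrite eqn_leq num_regions_le num_regions_ge.
Qed.
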